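(* Let $G$ be a finite simple graph with $n=|V(G)|$, and let $v_1,\dots,v_r$ be a $\beta$-sequence in $G$ such that $d(v_1)+\dots+d(v_r)\le (r-1)n$. Then $r\ge W(G)$.
   Context: Graphs are finite, undirected, without loops or multiple edges; $N(v)$ is the set of vertices adjacent to $v$, $d(v)=|N(v)|$, and $N(v_1,\dots,v_k)=\bigcap_{j=1}^k N(v_j)$. Define $W(G)=\sum_{v\in V(G)}\frac{1}{n-d(v)}$. A sequence $v_1,\dots,v_r$ of vertices is a $\beta$-sequence in $G$ if (i) $d(v_1)=\max\{d(v)\mid v\in V(G)\}$, and (ii) for $2\le i\le r$, $v_i\in N(v_1,\dots,v_{i-1})$ and $d(v_i)=\max\{d(v)\mid v\in N(v_1,\dots,v_{i-1})\}$ (degrees taken in $G$). *)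

From mathcomp Require Import all_boot all_order all_algebra.
Set Implicit Arguments. Unset Strict Implicit. Unset Printing Implicit Defensive.
Import Order.TTheory GRing.Theory Num.Theory.

(* A finite simple graph: vertex type T : finType, adjacency e : rel T,
   assumed symmetric and irreflexive (hypotheses of the theorem). *)

Definition nbhd (T : finType) (e : rel T) (v : T) : {set T} := [set u | e v u].
Definition deg (T : finType) (e : rel T) (v : T) : nat := #|nbhd e v|.

Definition common_nbhd (T : finType) (e : rel T) (p : seq T) : {set T} :=
  [set u | all (fun w => e w u) p].

Definition W (T : finType) (e : rel T) : rat :=
  \sum_(v : T) 1 / ((#|T| - deg e v)%:R).

(* beta-sequence v_1, ..., v_r (r >= 1), stored as s = [:: v_1; ...; v_r];
   index i (0-based) of s is v_{i+1}. *)
Definition beta_seq (T : finType) (e : rel T) (s : seq T) : Prop :=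
  match s with
  | [::] => False
  | v1 :: _ =>
      (forall u : T, deg e u <= deg e v1)%N /\
      (forall i : nat, (0 < i < size s)%N ->
         let vi := nth v1 s i in
         let Ni := common_nbhd e (take i s) in
         vi \in Ni /\ (forall u : T, u \in Ni -> (deg e u <= deg e vi)%N))
  end.

From mathcomp Require Import all_boot all_order all_algebra.
From mathcomp Require Import zify ring.
Set Implicit Arguments. Unset Strict Implicit. Unset Printing Implicit Defensive.
Import Order.TTheory GRing.Theory Num.Theory.
Local Open Scope ring_scope.

(* Write x(v) = n - d(v), the number of non-neighbours of v, v included.  The
   last term v_r of the beta-sequence lies in every N(v_1, ..., v_i), so the
   maximality of the degrees gives x(v_i) <= x(v_r).  For a vertex u, let v_j
   be the first term not adjacent to u: then u lies in N(v_1, ..., v_(j-1)),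
   whence 1/x(u) <= 1/x(v_j) = 1/x(v_r) + (1/x(v_j) - 1/x(v_r)); if u is
   adjacent to every v_i, then 1/x(u) <= 1/x(v_r).  Charging every non-neighbour
   of v_i with 1/x(v_i) - 1/x(v_r) >= 0 and summing over u gives
   W(G) <= (n - sum_i x(v_i)) / x(v_r) + r, and the degree hypothesis says
   precisely that sum_i x(v_i) >= n. *)

Definition nondeg (T : finType) (e : rel T) (v : T) : nat := (#|T| - deg e v)%N.

Lemma nondegE (T : finType) (e : rel T) (v : T) :
  nondeg e v = #|[set u | ~~ e v u]|.
Proof.
have -> : [set u | ~~ e v u] = ~: nbhd e v by apply/setP => u; rewrite !inE.
by rewrite /nondeg /deg -(cardsC (nbhd e v)) addKn.
Qed.

Lemma nondeg_gt0 (T : finType) (e : rel T) (v : T) :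
  irreflexive e -> (0 < nondeg e v)%N.
Proof.
by move=> e_irr; rewrite nondegE; apply/card_gt0P; exists v; rewrite inE e_irr.
Qed.

Lemma W_nondeg (T : finType) (e : rel T) : W e = \sum_(v : T) (nondeg e v)%:R^-1.
Proof. by apply: eq_bigr => v _; rewrite div1r. Qed.

Lemma lef_inv_nondeg {R : numFieldType} (T : finType) (e : rel T) (u w : T) :
  irreflexive e -> (deg e u <= deg e w)%N ->
  (nondeg e u)%:R^-1 <= (nondeg e w)%:R^-1 :> R.
Proof.
move=> e_irr le_uw; rewrite lef_pV2 ?posrE ?ltr0n ?nondeg_gt0 // ler_nat.
exact: leq_sub2l.
Qed.

Lemma sum_nondeg_ge (T : finType) (e : rel T) (s : seq T) : s != [::] ->
  (\sum_(v <- s) deg e v <= (size s - 1) * #|T|)%N ->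
  (#|T| <= \sum_(v <- s) nondeg e v)%N.
Proof.
move=> s_nil sum_deg.
have sum_deg_nondeg :
    (\sum_(v <- s) deg e v + \sum_(v <- s) nondeg e v = size s * #|T|)%N.
  rewrite -big_split (eq_bigr (fun=> #|T|)) => [|v _]; last first.
    by rewrite /= /nondeg subnKC ?max_card.
  by rewrite big_const_seq count_predT iter_addn_0 mulnC.
have : (0 < size s)%N by rewrite lt0n size_eq0.
by case: (size s) sum_deg sum_deg_nondeg => // r; rewrite subn1 mulSn /=; lia.
Qed.

Lemma common_nbhd_cat (T : finType) (e : rel T) (p q : seq T) :
  common_nbhd e (p ++ q) = common_nbhd e p :&: common_nbhd e q.
Proof. by apply/setP => u; rewrite !inE all_cat. Qed.

Lemma beta_seq_cat (T : finType) (e : rel T) (p q : seq T) (w : T) :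
  beta_seq e (p ++ w :: q) ->
  w \in common_nbhd e p /\
  {in common_nbhd e p, forall u, (deg e u <= deg e w)%N}.
Proof.
case: p => [|v1 p].
  by move=> /= [max_w _]; split=> [|u _]; [rewrite inE | apply: max_w].
move=> /= [_ /(_ (size (v1 :: p)))] []; first by rewrite size_cat /=; lia.
by rewrite -cat_cons nth_cat ltnn subnn take_size_cat.
Qed.

Lemma beta_seq_deg_last (T : finType) (e : rel T) (s : seq T) (x0 w : T) :
  beta_seq e s -> w \in s -> (deg e (last x0 s) <= deg e w)%N.
Proof.
case/lastP: s => [//|s l]; rewrite last_rcons mem_rcons inE.
move=> /[swap] /predU1P[-> //|/splitPr[p q] beta_s].
have /beta_seq_cat[l_nbhd _] : beta_seq e ((p ++ w :: q) ++ [:: l]).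
  by rewrite cats1.
have /beta_seq_cat[_ ->] // : beta_seq e (p ++ rcons (w :: q) l).
  by rewrite -rcons_cat.
by move: l_nbhd; rewrite common_nbhd_cat => /setIP[].
Qed.

Section BetaSequenceBound.

Variables (T : finType) (e : rel T) (v1 : T) (s' : seq T).
Hypotheses (e_irr : irreflexive e) (s_beta : beta_seq e (v1 :: s')).

Local Notation xr := ((nondeg e (last v1 s'))%:R : rat).

Lemma inv_nondeg_le_beta_seq (u : T) :
  (nondeg e u)%:R^-1 <=
  xr^-1 + \sum_(v <- v1 :: s' | ~~ e v u) ((nondeg e v)%:R^-1 - xr^-1).
Proof.
have corr_ge0 v : v \in v1 :: s' -> 0 <= (nondeg e v)%:R^-1 - xr^-1.
  move=> v_s; rewrite subr_ge0.
  exact: lef_inv_nondeg (beta_seq_deg_last v1 s_beta v_s).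
have [nadj_u|adj_all] := boolP (has (fun v => ~~ e v u) (v1 :: s')).
  move: corr_ge0 s_beta; case/split_find: nadj_u => w p q nadj_w nadj_p.
  rewrite cat_rcons => corr_ge0 /beta_seq_cat[_ deg_w].
  rewrite big_cat big_hasC //= add0r big_cons nadj_w addrA [xr^-1 + _]addrC subrK.
  apply: le_trans (lef_inv_nondeg e_irr (deg_w u _)) _.
    by rewrite inE; apply/allP => v v_p; exact: negbNE (hasPn nadj_p v v_p).
  rewrite lerDl big_seq_cond sumr_ge0 // => v /andP[v_q _].
  by apply: corr_ge0; rewrite mem_cat inE v_q !orbT.
have u_nbhd : u \in common_nbhd e (v1 :: s').
  by rewrite inE; apply/allP => v v_s; exact: negbNE (hasPn adj_all v v_s).
rewrite big_hasC // addr0; move: u_nbhd s_beta.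
rewrite lastI -cats1 common_nbhd_cat => /setIP[u_nbhd _].
move=> /beta_seq_cat[_ deg_last].
exact/lef_inv_nondeg/deg_last.
Qed.

Lemma W_le_beta_seq :
  W e <=
  (#|T|%:R - \sum_(v <- v1 :: s') (nondeg e v)%:R) / xr + (size (v1 :: s'))%:R.
Proof.
have corr_sum v :
    \sum_(u | ~~ e v u) ((nondeg e v)%:R^-1 - xr^-1) = 1 - (nondeg e v)%:R / xr.
  rewrite (eq_bigl (fun u => u \in [set u | ~~ e v u])) => [|u]; last first.
    by rewrite inE.
  rewrite sumr_const -nondegE -[LHS]mulr_natr mulrBl mulVf.
    by rewrite mulrC.
  by rewrite pnatr_eq0 -lt0n nondeg_gt0.
rewrite W_nondeg.
apply: le_trans (ler_sum _ (fun u _ => inv_nondeg_le_beta_seq u)) _.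
rewrite big_split /= sumr_const (exchange_big_dep predT) //=.
rewrite (eq_bigr _ (fun v _ => corr_sum v)).
have sum1 : \sum_(v <- v1 :: s') (1 : rat) = (size (v1 :: s'))%:R.
  by rewrite -sum1_size natr_sum.
rewrite sumrB sum1 -mulr_suml le_eqVlt; apply/predU1P; left.
change #|xpredT| with #|T|; rewrite /=; ring.
Qed.

End BetaSequenceBound.

Theorem theorem2 (T : finType) (e : rel T)
  (e_sym : symmetric e) (e_irr : irreflexive e) (s : seq T) :
  beta_seq e s ->
  (\sum_(v <- s) deg e v <= (size s - 1) * #|T|)%N ->
  W e <= (size s)%:R.
Proof.
case: s => [//|v1 s'] s_beta sum_deg.
apply: le_trans (W_le_beta_seq e_irr s_beta) _.
rewrite gerDr mulr_le0_ge0 ?invr_ge0 ?ler0n // subr_le0 -natr_sum ler_nat.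
exact: sum_nondeg_ge.
Qed.
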